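(* Let $S_n^0$ be the set of elements of $S_n$ all of whose coordinates are nonzero (i.e. $S_n^0=\{s\in\{-1,1\}^n: s_1=1\}$). Then $S_n^0$ is a minimal element (with respect to inclusion) of the poset $\mathcal{E}_n=\{X\subseteq S_n:\mathrm{Elim}(X)=S_n\}$; that is, $\mathrm{Elim}(S_n^0)=S_n$ and $\mathrm{Elim}(Y)\neq S_n$ for every proper subset $Y\subsetneq S_n^0$.
   Context: $S_n$ is the set of all nonzero $n$-tuples in $\{-1,0,1\}^n$ whose first nonzero entry equals $1$. A tuple $t=(t_1,\dots,t_n)\in\{1,0,-1,u\}^n$ ($u$ a formal symbol) eliminates $s\in S_n$ if: (i) $t_i\neq0$ and $s_i\neq0$ for some $i$; (ii) there is $k\in\{+1,-1\}$ with $t_i=ks_i$ for all $i$ with $s_i\neq0$ and $t_i\neq0$; (iii) $s_i=0$ whenever $t_i=u$. For $X\subseteq S_n$, $\mathrm{Elim}(X)$ is the set of elements of $S_n$ eliminated by at least one element of $X$. *)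

From mathcomp Require Import all_boot all_order all_algebra.
Set Implicit Arguments. Unset Strict Implicit. Unset Printing Implicit Defensive.
Import GRing.Theory Num.Theory.
Local Open Scope ring_scope.

Definition vec (n : nat) := 'I_n -> int.

Definition inS (n : nat) (s : vec n) : Prop :=
  (forall i, s i = 0 \/ s i = 1 \/ s i = -1) /\
  exists i : 'I_n, s i = 1 /\ forall j : 'I_n, (j < i)%N -> s j = 0.

Definition inS0 (n : nat) (s : vec n) : Prop := inS s /\ forall i, s i <> 0.

(* Entries of eliminating tuples: an integer value or the formal symbol u. *)
Inductive tsym := TV of int | TU.

Definition eliminates (n : nat) (t : 'I_n -> tsym) (s : vec n) : Prop :=
  (exists i, t i <> TV 0 /\ s i <> 0) /\
  (exists k : int, (k = 1 \/ k = -1) /\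
     forall i, s i <> 0 -> t i <> TV 0 -> t i = TV (k * s i)) /\
  (forall i, t i = TU -> s i = 0).

Definition Elim (n : nat) (X : vec n -> Prop) (s : vec n) : Prop :=
  inS s /\ exists t, X t /\ eliminates (fun i => TV (t i)) s.

From mathcomp Require Import all_boot all_order all_algebra.
From Stdlib Require Import FunctionalExtensionality.
Import GRing.Theory Num.Theory.
Local Open Scope ring_scope.
Set Implicit Arguments. Unset Strict Implicit.

(* Every s in S_n is eliminated by the tuple of S_n^0 obtained by replacing
   its zero entries with 1, so Elim(S_n^0) = S_n.  Conversely, an element
   y of S_n^0 has full support, so a tuple of S_n^0 eliminating it must be
   +-y, and the normalisation at the first coordinate forces it to be y
   itself: removing y from S_n^0 leaves y uneliminated. *)

Section SignTuples.

Variable n : nat.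
Implicit Types s t : vec n.

Lemma inS_first_nonzero s (i : 'I_n) :
  inS s -> val i = 0%N -> s i <> 0 -> s i = 1.
Proof.
move=> [_ [i0 [si0 below_i0]]] i_0 si_nz.
case: (posnP i0) => [i0_0 | i0_pos].
  by rewrite (_ : i = i0) //; apply: val_inj; rewrite i_0.
by case: si_nz; apply: below_i0; rewrite i_0.
Qed.

Lemma inS0_first s : inS0 s -> exists i : 'I_n, val i = 0%N /\ s i = 1.
Proof.
move=> [s_S s_nz]; have [_ [i _]] := s_S.
pose i' := Ordinal (leq_ltn_trans (leq0n i) (ltn_ord i)).
by exists i'; split => //; apply: inS_first_nonzero.
Qed.

Lemma inS0_intro s (i : 'I_n) :
  (forall j, s j = 1 \/ s j = -1) -> val i = 0%N -> s i = 1 -> inS0 s.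
Proof.
move=> s_pm1 i_0 si1; split; last by move=> j; case: (s_pm1 j) => ->.
split; first by move=> j; right.
by exists i; split => // j; rewrite i_0.
Qed.

Lemma eliminates_full_support t s :
  (forall i, t i <> 0) -> (forall i, s i <> 0) ->
  eliminates (fun i => TV (t i)) s ->
  exists k : int, (k = 1 \/ k = -1) /\ forall i, t i = k * s i.
Proof.
move=> t_nz s_nz [_ [[k [k_pm1 t_ks]] _]].
exists k; split => // i.
have tv_nz : TV (t i) <> TV 0 by case => /t_nz.
by case: (t_ks i (s_nz i) tv_nz).
Qed.

Lemma inS0_eliminates_eq t s :
  inS0 t -> inS0 s -> eliminates (fun i => TV (t i)) s -> t = s.
Proof.
move=> t0 s0 elim_ts.
have [k [k_pm1 t_ks]] := eliminates_full_support (proj2 t0) (proj2 s0) elim_ts.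
have [i [i_0 si1]] := inS0_first s0.
have k1 : k = 1.
  have := inS_first_nonzero (proj1 t0) i_0 (proj2 t0 i).
  by rewrite t_ks si1 mulr1.
by apply: functional_extensionality => j; rewrite t_ks k1 mul1r.
Qed.

Definition fill_ones s : vec n := fun i => if s i == 0 then 1 else s i.

Lemma fill_ones_inS0 s : inS s -> inS0 (fill_ones s).
Proof.
move=> s_S; have [_ [i0 _]] := s_S.
pose i := Ordinal (leq_ltn_trans (leq0n i0) (ltn_ord i0)).
apply: (inS0_intro (i := i)) => // [j|].
  rewrite /fill_ones; case: eqP => [_|sj_nz]; first by left.
  by case: (proj1 s_S j) => [/sj_nz | [] ->]; [| left | right].
rewrite /fill_ones; case: eqP => // si_nz.
exact: inS_first_nonzero.
Qed.

Lemma fill_ones_eliminates s :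
  inS s -> eliminates (fun i => TV (fill_ones s i)) s.
Proof.
move=> [_ [i0 [si0 _]]]; split.
  by exists i0; rewrite /fill_ones si0.
split; last by [].
exists 1; split; first by left.
by move=> i si_nz _; rewrite mul1r /fill_ones; case: eqP.
Qed.

Lemma Elim_inS0 s : Elim (@inS0 n) s <-> inS s.
Proof.
split; first by case.
move=> s_S; split => //.
exists (fill_ones s); split; [exact: fill_ones_inS0 | exact: fill_ones_eliminates].
Qed.

End SignTuples.

Theorem mainTheorem7 (n : nat) :
  (forall s : vec n, Elim (@inS0 n) s <-> inS s) /\
  (forall Y : vec n -> Prop,
     (forall y, Y y -> inS0 y) ->
     (exists y, inS0 y /\ ~ Y y) ->
     ~ (forall s : vec n, Elim Y s <-> inS s)).
Proof.
split; first exact: Elim_inS0.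
move=> Y Y_S0 [y [y0 y_notin_Y]] Elim_Y.
have [_ [t [Yt elim_ty]]] := proj2 (Elim_Y y) (proj1 y0).
by apply: y_notin_Y; rewrite -(inS0_eliminates_eq (Y_S0 t Yt) y0 elim_ty).
Qed.
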